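(* Let $F:\mathbb R^5\to\mathbb R$, $$F(a,b,c,d,A)=-2(a+c)-2\bigl[(ac+bd)\cos2A+(bc-ad)\sin2A\bigr]+a^2+b^2+c^2+d^2+1,$$ and let $\mathbb S=F^{-1}(0)$. Then at every point of $\mathbb S$ with $-\pi/2<A<\pi/2$, $a^2+b^2\ne0$ and $c^2+d^2\ne0$, the gradient of $F$ is nonzero (i.e. $\mathbb S$ has no singular points there).
   Context: Here $X_1=a+bi$, $X_2=c+di$, and $F=0$ is the equation $-2\,\mathrm{Re}(X_1+X_2)-2\,\mathrm{Re}(X_1\overline{X}_2e^{-2iA})+|X_1|^2+|X_2|^2+1=0$ written in real coordinates; $\mathbb S$ is called the basic variety. A singular point of $\mathbb S$ is a point of $\mathbb S$ at which all partial derivatives of $F$ vanish. *)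

From Stdlib Require Import Reals.
From Coquelicot Require Import Coquelicot.
Open Scope R_scope.

Definition F (a b c d A : R) : R :=
  - 2 * (a + c)
  - 2 * ((a * c + b * d) * cos (2 * A) + (b * c - a * d) * sin (2 * A))
  + a ^ 2 + b ^ 2 + c ^ 2 + d ^ 2 + 1.

Definition in_S (a b c d A : R) : Prop := F a b c d A = 0.

Definition singular_point (a b c d A : R) : Prop :=
  in_S a b c d A /\
  Derive (fun x => F x b c d A) a = 0 /\
  Derive (fun x => F a x c d A) b = 0 /\
  Derive (fun x => F a b x d A) c = 0 /\
  Derive (fun x => F a b c x A) d = 0 /\
  Derive (fun x => F a b c d x) A = 0.

(* At a critical point of F the partial derivatives in a, c and d already force
   cos 2A = -1: substituting the d-equation and the c-equation into the
   a-equation collapses, via cos^2 + sin^2 = 1, to a = 1 + cos 2A + a.  This is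
   impossible for |A| < pi/2, where cos 2A = 2 cos^2 A - 1 > -1. *)
From Stdlib Require Import Reals Lra.
From Coquelicot Require Import Coquelicot.
Open Scope R_scope.

Lemma Derive_F_a (a b c d A : R) :
  Derive (fun x => F x b c d A) a
  = 2 * a - 2 - 2 * (c * cos (2 * A) - d * sin (2 * A)).
Proof. apply is_derive_unique; unfold F; auto_derive; [auto | ring]. Qed.

Lemma Derive_F_c (a b c d A : R) :
  Derive (fun x => F a b x d A) c
  = 2 * c - 2 - 2 * (a * cos (2 * A) + b * sin (2 * A)).
Proof. apply is_derive_unique; unfold F; auto_derive; [auto | ring]. Qed.

Lemma Derive_F_d (a b c d A : R) :
  Derive (fun x => F a b c x A) d
  = 2 * d - 2 * (b * cos (2 * A) - a * sin (2 * A)).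
Proof. apply is_derive_unique; unfold F; auto_derive; [auto | ring]. Qed.

Lemma critical_equations_cos_eq_m1 (a b c d C S : R) :
  C ^ 2 + S ^ 2 = 1 ->
  2 * a - 2 - 2 * (c * C - d * S) = 0 ->
  2 * c - 2 - 2 * (a * C + b * S) = 0 ->
  2 * d - 2 * (b * C - a * S) = 0 ->
  C = -1.
Proof.
  intros HCS Ha Hc Hd.
  assert (Hcd : c * C - d * S = C + a * (C ^ 2 + S ^ 2)).
  { replace c with (1 + a * C + b * S) by lra.
    replace d with (b * C - a * S) by lra.
    ring. }
  rewrite HCS in Hcd; lra.
Qed.

Lemma cos_double_neq_m1 (A : R) : - (PI / 2) < A < PI / 2 -> cos (2 * A) <> -1.
Proof.
  intros HA.
  assert (Hcos : 0 < cos A) by (apply cos_gt_0; lra).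
  rewrite cos_2a_cos; nra.
Qed.

Theorem proposition3p4 (a b c d A : R) :
  in_S a b c d A ->
  - (PI / 2) < A < PI / 2 ->
  a ^ 2 + b ^ 2 <> 0 ->
  c ^ 2 + d ^ 2 <> 0 ->
  ~ singular_point a b c d A.
Proof.
  intros _ HA _ _ [_ [Ha [_ [Hc [Hd _]]]]].
  rewrite Derive_F_a in Ha; rewrite Derive_F_c in Hc; rewrite Derive_F_d in Hd.
  apply (cos_double_neq_m1 A HA).
  apply (critical_equations_cos_eq_m1 a b c d _ (sin (2 * A))); auto.
  rewrite <- (sin2_cos2 (2 * A)); unfold Rsqr; ring.
Qed.
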